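(* Let $\phi$ be an LTL formula. For every $\mathbf{AX}^{fin}$-atom $V_0$ of $\phi$ there is a finite chain of $\mathbf{AX}^{fin}$-atoms $V_0,\dots,V_k$ such that $\bigcirc\mathit{false}\in V_k$.
   Context: LTL formulas: grammar $\phi ::= p\mid\neg\phi\mid\phi\wedge\psi\mid\bigcirc\phi\mid\phi\,\mathcal{U}\,\psi$ over propositions $p\in\Phi_0$; $\vee,\Rightarrow$ standard abbreviations; $\mathit{true}$ a fixed tautology, $\mathit{false}:=\neg\mathit{true}$, $\Diamond\phi:=\mathit{true}\,\mathcal{U}\,\phi$, $\overline{\bigcirc}\phi:=\neg\bigcirc\neg\phi$. $\mathbf{AX}^{fin}$ consists of Prop (all propositional tautology instances), MP (from $\phi$, $\phi\Rightarrow\psi$ infer $\psi$), T1: $\bigcirc\phi\wedge\bigcirc(\phi\Rightarrow\psi)\Rightarrow\bigcirc\psi$, T2': $\phi\,\mathcal{U}\,\psi\Leftrightarrow\psi\vee(\phi\wedge\overline{\bigcirc}(\phi\,\mathcal{U}\,\psi))$, T3': $\bigcirc\phi\Leftrightarrow(\bigcirc\mathit{false}\vee\overline{\bigcirc}\phi)$, RT1 (from $\phi$ infer $\bigcirc\phi$), RT2 (from $\phi'\Rightarrow\neg\psi\wedge\bigcirc\phi'$ infer $\phi'\Rightarrow\neg(\phi\,\mathcal{U}\,\psi)$), and Fin: $\Diamond\bigcirc\mathit{false}$. A formula is consistent if its negation is not provable; a finite set is consistent if its conjunction is. Closure: $Cl'(\phi)$ is the smallest set $S$ with $\phi\in S$;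 $\mathit{true}\,\mathcal{U}\,\bigcirc\mathit{false}\in S$; $\neg\psi\in S\Rightarrow\psi\in S$; $\psi_1\wedge\psi_2\in S\Rightarrow\psi_1,\psi_2\in S$; $\bigcirc\psi\in S\Rightarrow\psi\in S$; $\bigcirc\neg\psi\in S\Rightarrow\bigcirc\psi\in S$; $\psi_1\,\mathcal{U}\,\psi_2\in S\Rightarrow\psi_1,\psi_2,\overline{\bigcirc}(\psi_1\,\mathcal{U}\,\psi_2)\in S$. $Cl(\phi)=Cl'(\phi)\cup\{\neg\psi:\psi\in Cl'(\phi)\}$. An $\mathbf{AX}^{fin}$-atom of $\phi$ is a maximal consistent subset of $Cl(\phi)$; $\widehat V$ is the conjunction of its formulas. $V\to W$ iff $\widehat V\wedge\overline{\bigcirc}\widehat W$ is consistent. A chain is a sequence $V_0,V_1,\dots$ of atoms with $V_i\to V_{i+1}$ for consecutive indices. *)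

From Stdlib Require Import List.
Import ListNotations.

Inductive form : Type :=
| Var : nat -> form
| Not : form -> form
| And : form -> form -> form
| Next : form -> form
| Until : form -> form -> form.

Definition Or (a b : form) : form := Not (And (Not a) (Not b)).
Definition Imp (a b : form) : form := Or (Not a) b.
Definition Iff (a b : form) : form := And (Imp a b) (Imp b a).

Definition ltrue : form := Imp (Var 0) (Var 0).
Definition lfalse : form := Not ltrue.
Definition Ev (a : form) : form := Until ltrue a.
Definition WNext (a : form) : form := Not (Next (Not a)).

Inductive pform : Type :=
| PVar : nat -> pform
| PNot : pform -> pform
| PAnd : pform -> pform -> pform.

Fixpoint peval (v : nat -> bool) (t : pform) : bool :=
  match t with
  | PVar n => v n
  | PNot t => negb (peval v t)
  | PAnd t u => andb (peval v t) (peval v u)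
  end.

Definition ptautology (t : pform) : Prop := forall v, peval v t = true.

Fixpoint psubst (s : nat -> form) (t : pform) : form :=
  match t with
  | PVar n => s n
  | PNot t => Not (psubst s t)
  | PAnd t u => And (psubst s t) (psubst s u)
  end.

Inductive Provable : form -> Prop :=
| ax_Prop : forall (t : pform) (s : nat -> form),
    ptautology t -> Provable (psubst s t)
| ax_MP : forall a b, Provable a -> Provable (Imp a b) -> Provable b
| ax_T1 : forall a b,
    Provable (Imp (And (Next a) (Next (Imp a b))) (Next b))
| ax_T2' : forall a b,
    Provable (Iff (Until a b) (Or b (And a (WNext (Until a b)))))
| ax_T3' : forall a,
    Provable (Iff (Next a) (Or (Next lfalse) (WNext a)))
| ax_RT1 : forall a, Provable a -> Provable (Next a)
| ax_RT2 : forall a b c,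
    Provable (Imp c (And (Not b) (Next c))) ->
    Provable (Imp c (Not (Until a b)))
| ax_Fin : Provable (Ev (Next lfalse)).

Definition consistent (a : form) : Prop := ~ Provable (Not a).

Fixpoint conj (l : list form) : form :=
  match l with
  | [] => ltrue
  | [a] => a
  | a :: l' => And a (conj l')
  end.

Definition fset := form -> Prop.

Definition enumerates (l : list form) (A : fset) : Prop :=
  forall x, In x l <-> A x.

Definition set_consistent (A : fset) : Prop :=
  exists l, enumerates l A /\ consistent (conj l).

Inductive Clp (phi : form) : form -> Prop :=
| clp_self : Clp phi phi
| clp_fin : Clp phi (Until ltrue (Next lfalse))
| clp_not : forall a, Clp phi (Not a) -> Clp phi a
| clp_andl : forall a b, Clp phi (And a b) -> Clp phi a
| clp_andr : forall a b, Clp phi (And a b) -> Clp phi b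
| clp_next : forall a, Clp phi (Next a) -> Clp phi a
| clp_nextnot : forall a, Clp phi (Next (Not a)) -> Clp phi (Next a)
| clp_untill : forall a b, Clp phi (Until a b) -> Clp phi a
| clp_untilr : forall a b, Clp phi (Until a b) -> Clp phi b
| clp_untilw : forall a b, Clp phi (Until a b) -> Clp phi (WNext (Until a b)).

Definition Cl (phi : form) (a : form) : Prop :=
  Clp phi a \/ exists b, a = Not b /\ Clp phi b.

Definition atom (phi : form) (V : fset) : Prop :=
  (forall a, V a -> Cl phi a) /\
  set_consistent V /\
  (forall W : fset, (forall a, W a -> Cl phi a) -> (forall a, V a -> W a) ->
     set_consistent W -> forall a, W a -> V a).

Definition trans (V W : fset) : Prop :=
  exists lv lw, enumerates lv V /\ enumerates lw W /\
    consistent (And (conj lv) (WNext (conj lw))).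

(* Suppose no chain from V0 reaches an atom containing ○false, and let Psi be the
   disjunction of the conjunctions of all atoms reachable from V0.  A reachable atom
   contains ¬○false, and every atom it cannot step to is refuted one step ahead, so
   ⊢ Psi ⇒ ¬○false ∧ ○Psi.  By RT2, ⊢ Psi ⇒ ¬◇○false, which together with Fin
   gives ⊢ ¬Psi; this refutes the conjunction of V0, contradicting its consistency. *)

From Pilot Require Import Defs.
From Stdlib Require Import List Classical ClassicalEpsilon FunctionalExtensionality
  PropExtensionality PeanoNat Lia.
Import ListNotations.

(** * Propositional reasoning in AX^fin *)

Local Notation POr a b := (PNot (PAnd (PNot a) (PNot b))).
Local Notation PImp a b := (POr (PNot a) b).
Local Notation P0 := (PVar 0).
Local Notation P1 := (PVar 1).
Local Notation P2 := (PVar 2).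
Local Notation P3 := (PVar 3).

Definition list_subst (l : list form) (n : nat) : form := nth n l ltrue.

Lemma tautology_instance (t : pform) (l : list form) :
  ptautology t -> Provable (psubst (list_subst l) t).
Proof. exact (ax_Prop t (list_subst l)). Qed.

(* [ptaut t l] proves the instance of the tautology [t] whose variable [i] is [nth i l]. *)
Ltac ptaut t l :=
  refine (tautology_instance t l _);
  let v := fresh "v" in
  intro v; simpl;
  repeat match goal with |- context [v ?n] => destruct (v n) end;
  reflexivity.

Lemma mp2 a b c : Provable a -> Provable b -> Provable (Imp a (Imp b c)) -> Provable c.
Proof. intros Ha Hb H. exact (ax_MP _ _ Hb (ax_MP _ _ Ha H)). Qed.

Lemma prov_true : Provable ltrue.
Proof. ptaut (PImp P0 P0) [Var 0]. Qed.

Lemma imp_refl a : Provable (Imp a a).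
Proof. ptaut (PImp P0 P0) [a]. Qed.

Lemma imp_trans a b c : Provable (Imp a b) -> Provable (Imp b c) -> Provable (Imp a c).
Proof.
  intros H1 H2; apply (mp2 _ _ _ H1 H2).
  ptaut (PImp (PImp P0 P1) (PImp (PImp P1 P2) (PImp P0 P2))) [a; b; c].
Qed.

Lemma imp_const x a : Provable a -> Provable (Imp x a).
Proof. intro H; apply (ax_MP _ _ H). ptaut (PImp P0 (PImp P1 P0)) [a; x]. Qed.

Lemma imp_and x a b :
  Provable (Imp x a) -> Provable (Imp x b) -> Provable (Imp x (And a b)).
Proof.
  intros H1 H2; apply (mp2 _ _ _ H1 H2).
  ptaut (PImp (PImp P0 P1) (PImp (PImp P0 P2) (PImp P0 (PAnd P1 P2)))) [x; a; b].
Qed.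

Lemma and_proj1 a b : Provable (Imp (And a b) a).
Proof. ptaut (PImp (PAnd P0 P1) P0) [a; b]. Qed.

Lemma and_proj2 a b : Provable (Imp (And a b) b).
Proof. ptaut (PImp (PAnd P0 P1) P1) [a; b]. Qed.

Lemma or_intro_l a b : Provable (Imp a (Or a b)).
Proof. ptaut (PImp P0 (POr P0 P1)) [a; b]. Qed.

Lemma or_intro_r a b : Provable (Imp b (Or a b)).
Proof. ptaut (PImp P1 (POr P0 P1)) [a; b]. Qed.

Lemma or_elim a b c :
  Provable (Imp a c) -> Provable (Imp b c) -> Provable (Imp (Or a b) c).
Proof.
  intros H1 H2; apply (mp2 _ _ _ H1 H2).
  ptaut (PImp (PImp P0 P2) (PImp (PImp P1 P2) (PImp (POr P0 P1) P2))) [a; b; c].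
Qed.

Lemma or_cases p c : Provable (Imp c (Or (And p c) (And (Not p) c))).
Proof. ptaut (PImp P1 (POr (PAnd P0 P1) (PAnd (PNot P0) P1))) [p; c]. Qed.

Lemma false_elim a : Provable (Imp lfalse a).
Proof. ptaut (PImp (PNot (PImp P0 P0)) P1) [Var 0; a]. Qed.

Lemma imp_not_not a b : Provable (Imp a b) -> Provable (Not b) -> Provable (Not a).
Proof.
  intros H1 H2; apply (mp2 _ _ _ H1 H2).
  ptaut (PImp (PImp P0 P1) (PImp (PNot P1) (PNot P0))) [a; b].
Qed.

Lemma contrapose a b : Provable (Imp a b) -> Provable (Imp (Not b) (Not a)).
Proof.
  intro H; apply (ax_MP _ _ H).
  ptaut (PImp (PImp P0 P1) (PImp (PNot P1) (PNot P0))) [a; b].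
Qed.

Lemma imp_of_not_and_not a b : Provable (Not (And a (Not b))) -> Provable (Imp a b).
Proof.
  intro H; apply (ax_MP _ _ H).
  ptaut (PImp (PNot (PAnd P0 (PNot P1))) (PImp P0 P1)) [a; b].
Qed.

Lemma not_of_imp_contra x a :
  Provable (Imp x a) -> Provable (Imp x (Not a)) -> Provable (Not x).
Proof.
  intros H1 H2; apply (mp2 _ _ _ H1 H2).
  ptaut (PImp (PImp P0 P1) (PImp (PImp P0 (PNot P1)) (PNot P0))) [x; a].
Qed.

Lemma not_by_cases p c :
  Provable (Not (And p c)) -> Provable (Not (And (Not p) c)) -> Provable (Not c).
Proof.
  intros H1 H2; apply (mp2 _ _ _ H1 H2).
  ptaut (PImp (PNot (PAnd P0 P1)) (PImp (PNot (PAnd (PNot P0) P1)) (PNot P1))) [p; c].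
Qed.

Lemma imp_uncurry a b c : Provable (Imp a (Imp b c)) -> Provable (Imp (And a b) c).
Proof.
  intro H; apply (ax_MP _ _ H).
  ptaut (PImp (PImp P0 (PImp P1 P2)) (PImp (PAnd P0 P1) P2)) [a; b; c].
Qed.

Lemma imp_add_hyp a b c : Provable (Imp a c) -> Provable (Imp a (Imp b c)).
Proof.
  intro H; apply (ax_MP _ _ H).
  ptaut (PImp (PImp P0 P2) (PImp P0 (PImp P1 P2))) [a; b; c].
Qed.

Lemma imp_absurd a b c : Provable (Imp b (Not a)) -> Provable (Imp a (Imp b c)).
Proof.
  intro H; apply (ax_MP _ _ H).
  ptaut (PImp (PImp P1 (PNot P0)) (PImp P0 (PImp P1 P2))) [a; b; c].
Qed.

Lemma iff_imp_l a b : Provable (Iff a b) -> Provable (Imp a b).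
Proof.
  intro H; apply (ax_MP _ _ H).
  ptaut (PImp (PAnd (PImp P0 P1) (PImp P1 P0)) (PImp P0 P1)) [a; b].
Qed.

Lemma iff_imp_r a b : Provable (Iff a b) -> Provable (Imp b a).
Proof.
  intro H; apply (ax_MP _ _ H).
  ptaut (PImp (PAnd (PImp P0 P1) (PImp P1 P0)) (PImp P1 P0)) [a; b].
Qed.

(** * Derived temporal rules *)

Lemma next_mono a b : Provable (Imp a b) -> Provable (Imp (Next a) (Next b)).
Proof.
  intro H; apply (mp2 _ _ _ (ax_RT1 _ H) (ax_T1 a b)).
  ptaut (PImp P1 (PImp (PImp (PAnd P0 P1) P2) (PImp P0 P2)))
    [Next a; Next (Imp a b); Next b].
Qed.

Lemma next_and a b : Provable (Imp (And (Next a) (Next b)) (Next (And a b))).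
Proof.
  assert (Hb : Provable (Imp (Next b) (Next (Imp a (And a b))))).
  { apply next_mono. ptaut (PImp P1 (PImp P0 (PAnd P0 P1))) [a; b]. }
  apply (mp2 _ _ _ Hb (ax_T1 a (And a b))).
  ptaut (PImp (PImp P1 P3) (PImp (PImp (PAnd P0 P3) P2) (PImp (PAnd P0 P1) P2)))
    [Next a; Next b; Next (And a b); Next (Imp a (And a b))].
Qed.

Lemma wnext_mono a b : Provable (Imp a b) -> Provable (Imp (WNext a) (WNext b)).
Proof. intro H. apply contrapose, next_mono, contrapose, H. Qed.

Lemma wnext_and_next a b : Provable (Imp (And (WNext a) (Next b)) (WNext (And a b))).
Proof.
  assert (Hn : Provable (Imp (Next (Not (And a b))) (Next (Imp b (Not a))))).
  { apply next_mono. ptaut (PImp (PNot (PAnd P0 P1)) (PImp P1 (PNot P0))) [a; b]. }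
  apply (mp2 _ _ _ Hn (ax_T1 b (Not a))).
  ptaut (PImp (PImp P0 P1) (PImp (PImp (PAnd P2 P1) P3) (PImp (PAnd (PNot P3) P2) (PNot P0))))
    [Next (Not (And a b)); Next (Imp b (Not a)); Next b; Next (Not a)].
Qed.

Lemma next_wnext_not_end a : Provable (Imp (And (Not (Next lfalse)) (Next a)) (WNext a)).
Proof.
  apply (ax_MP _ _ (iff_imp_l _ _ (ax_T3' a))).
  ptaut (PImp (PImp P0 (POr P1 P2)) (PImp (PAnd (PNot P1) P0) P2))
    [Next a; Next lfalse; WNext a].
Qed.

Lemma wnext_next a : Provable (Imp (WNext a) (Next a)).
Proof. exact (imp_trans _ _ _ (or_intro_r _ _) (iff_imp_r _ _ (ax_T3' a))). Qed.

(* RT2 with [Until ltrue] plus Fin: an invariant that postpones the end forever is refutable. *)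
Lemma not_invariant_before_end c :
  Provable (Imp c (And (Not (Next lfalse)) (Next c))) -> Provable (Not c).
Proof.
  intro H; apply (mp2 _ _ _ (ax_RT2 ltrue (Next lfalse) c H) ax_Fin).
  ptaut (PImp (PImp P0 (PNot P1)) (PImp P1 (PNot P0))) [c; Ev (Next lfalse)].
Qed.

(** * Finite conjunctions and disjunctions *)

(* [bigand] is the uniform conjunction; [conj] of [Defs] special-cases singletons. *)
Fixpoint bigand (l : list form) : form :=
  match l with [] => ltrue | a :: l' => And a (bigand l') end.

Fixpoint bigor (l : list form) : form :=
  match l with [] => lfalse | a :: l' => Or a (bigor l') end.

Lemma bigand_proj l x : In x l -> Provable (Imp (bigand l) x).
Proof.
  induction l as [|a l IH]; intro Hx; [destruct Hx|]; destruct Hx as [<-|Hx].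
  - apply and_proj1.
  - exact (imp_trans _ _ _ (and_proj2 _ _) (IH Hx)).
Qed.

Lemma imp_bigand c l :
  (forall x, In x l -> Provable (Imp c x)) -> Provable (Imp c (bigand l)).
Proof.
  induction l as [|a l IH]; intro H; simpl.
  - exact (imp_const _ _ prov_true).
  - apply imp_and; [apply H; left; reflexivity | apply IH; intros x Hx; apply H; right; exact Hx].
Qed.

Lemma conj_proj l x : In x l -> Provable (Imp (conj l) x).
Proof.
  induction l as [|a [|b l'] IH]; intro Hx; [destruct Hx| |].
  - destruct Hx as [<-|[]]. apply imp_refl.
  - destruct Hx as [<-|Hx]; [apply and_proj1|].
    exact (imp_trans _ _ _ (and_proj2 _ _) (IH Hx)).
Qed.

Lemma imp_conj c l :
  (forall x, In x l -> Provable (Imp c x)) -> Provable (Imp c (conj l)).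
Proof.
  induction l as [|a [|b l'] IH]; intro H.
  - exact (imp_const _ _ prov_true).
  - apply H; left; reflexivity.
  - apply imp_and; [apply H; left; reflexivity | apply IH; intros x Hx; apply H; right; exact Hx].
Qed.

Lemma bigand_conj l : Provable (Imp (bigand l) (conj l)).
Proof. apply imp_conj. intros x Hx. exact (bigand_proj _ _ Hx). Qed.

Lemma bigor_intro l x : In x l -> Provable (Imp x (bigor l)).
Proof.
  induction l as [|a l IH]; intro Hx; [destruct Hx|]; destruct Hx as [<-|Hx].
  - apply or_intro_l.
  - exact (imp_trans _ _ _ (IH Hx) (or_intro_r _ _)).
Qed.

Lemma bigor_elim l c :
  (forall x, In x l -> Provable (Imp x c)) -> Provable (Imp (bigor l) c).
Proof.
  induction l as [|a l IH]; intro H; simpl.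
  - apply false_elim.
  - apply or_elim; [apply H; left; reflexivity | apply IH; intros x Hx; apply H; right; exact Hx].
Qed.

Lemma imp_next_bigand c l :
  (forall x, In x l -> Provable (Imp c (Next x))) -> Provable (Imp c (Next (bigand l))).
Proof.
  induction l as [|a l IH]; intro H; simpl.
  - exact (imp_const _ _ (ax_RT1 _ prov_true)).
  - refine (imp_trans _ _ _ (imp_and _ _ _ _ _) (next_and _ _)).
    + apply H; left; reflexivity.
    + apply IH; intros x Hx; apply H; right; exact Hx.
Qed.

Lemma bigor_filter {A} (f : A -> form) (q : A -> bool) (M : list A) :
  Provable (Imp (And (bigor (map f M))
                     (bigand (map (fun a => Not (f a)) (filter (fun a => negb (q a)) M))))
                (bigor (map f (filter q M)))).
Proof.
  apply imp_uncurry, bigor_elim. intros x Hx.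
  apply in_map_iff in Hx. destruct Hx as [a [<- Ha]].
  destruct (q a) eqn:Hq.
  - apply imp_add_hyp, bigor_intro, in_map, filter_In. split; assumption.
  - apply imp_absurd, bigand_proj, (in_map (fun a => Not (f a))), filter_In.
    rewrite Hq. split; [assumption | reflexivity].
Qed.

(** * Finiteness of the closure *)

Fixpoint subformulas (f : form) : list form :=
  f :: match f with
       | Var _ => []
       | Not a | Next a => subformulas a
       | And a b | Until a b => subformulas a ++ subformulas b
       end.

Lemma subformulas_refl f : In f (subformulas f).
Proof. destruct f; left; reflexivity. Qed.

#[local] Hint Resolve subformulas_refl in_or_app : core.

Lemma subformulas_trans f g h :
  In g (subformulas f) -> In h (subformulas g) -> In h (subformulas f).
Proof.
  induction f; intros Hg Hh; destruct Hg as [<-|Hg]; try exact Hh; simpl in Hg; right;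
    try apply in_app_iff in Hg; intuition eauto.
Qed.

Definition closure_base (phi : form) : list form :=
  subformulas phi ++ subformulas (Ev (Next lfalse)).

Lemma closure_base_closed phi g h :
  In g (closure_base phi) -> In h (subformulas g) -> In h (closure_base phi).
Proof.
  unfold closure_base; intros Hg Hh; apply in_app_iff in Hg; apply in_or_app.
  destruct Hg; [left | right]; eapply subformulas_trans; eauto.
Qed.

(* Every member of Cl'(phi) has one of these shapes over a subformula [g] of phi or of
   ◇○false; the last two come from the rules for ○¬ and for the unfolding of Until. *)
Definition closure_shapes (g : form) : list form :=
  [g; Next g; Not g; Next (Not g); WNext g].

Definition closure_bound (phi : form) : list form := flat_map closure_shapes (closure_base phi).

Lemma closure_bound_shape phi g x :
  In g (closure_base phi) -> In x (closure_shapes g) -> In x (closure_bound phi).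
Proof. intros Hg Hx. apply in_flat_map. exists g. split; assumption. Qed.

Lemma closure_bound_sub phi g h :
  In g (closure_base phi) -> In h (subformulas g) -> In h (closure_bound phi).
Proof.
  intros Hg Hh. apply (closure_bound_shape phi h); [| left; reflexivity].
  exact (closure_base_closed _ _ _ Hg Hh).
Qed.

Lemma closure_bound_sub_next phi g h :
  In g (closure_base phi) -> In h (subformulas g) -> In (Next h) (closure_bound phi).
Proof.
  intros Hg Hh. apply (closure_bound_shape phi h); [| right; left; reflexivity].
  exact (closure_base_closed _ _ _ Hg Hh).
Qed.

Lemma Clp_closure_bound phi x : Clp phi x -> In x (closure_bound phi).
Proof.
  intro H; induction H;
    [ apply (closure_bound_sub phi phi); unfold closure_base; auto
    | apply (closure_bound_sub phi (Ev (Next lfalse))); unfold closure_base; auto | ..];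
    apply in_flat_map in IHClp; destruct IHClp as [g [Hg Hs]];
    destruct Hs as [E|[E|[E|[E|[E|[]]]]]]; try discriminate;
    try (injection E as E); subst;
    match goal with Hg : In ?g (closure_base _) |- _ =>
      first
        [ apply (closure_bound_shape phi g); [exact Hg | solve [simpl; auto 7]]
        | apply (closure_bound_sub phi g); [exact Hg | solve [simpl; auto 10]]
        | apply (closure_bound_sub_next phi g); [exact Hg | solve [simpl; auto 10]] ]
    end.
Qed.

Definition classicb (P : Prop) : bool :=
  if excluded_middle_informative P then true else false.

Lemma classicb_true P : classicb P = true <-> P.
Proof.
  unfold classicb; destruct (excluded_middle_informative P); split; intro; auto; discriminate.
Qed.

Definition closure_list (phi : form) : list form :=
  filter (fun x => classicb (Clp phi x)) (closure_bound phi).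

Lemma closure_list_spec phi x : In x (closure_list phi) <-> Clp phi x.
Proof.
  unfold closure_list. rewrite filter_In, classicb_true.
  split; [tauto | intro H; split; [apply Clp_closure_bound |]; exact H].
Qed.

(** * Atoms as choices of literals *)

Fixpoint literal_choices (L : list form) : list (list form) :=
  match L with
  | [] => [[]]
  | p :: L' => map (cons p) (literal_choices L') ++ map (cons (Not p)) (literal_choices L')
  end.

Lemma literal_choices_decide L m p :
  In m (literal_choices L) -> In p L -> In p m \/ In (Not p) m.
Proof.
  revert m; induction L as [|q L IH]; simpl; intros m Hm Hp; [contradiction|].
  apply in_app_iff in Hm.
  destruct Hm as [Hm|Hm]; apply in_map_iff in Hm; destruct Hm as [m' [<- Hm']];
    destruct Hp as [<-|Hp]; simpl; auto; destruct (IH m' Hm' Hp); auto.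
Qed.

Lemma literal_choices_literal L m x :
  In m (literal_choices L) -> In x m -> In x L \/ exists p, x = Not p /\ In p L.
Proof.
  revert m; induction L as [|q L IH]; simpl; intros m Hm Hx.
  - destruct Hm as [<-|[]]. destruct Hx.
  - apply in_app_iff in Hm.
    destruct Hm as [Hm|Hm]; apply in_map_iff in Hm; destruct Hm as [m' [<- Hm']];
      destruct Hx as [<-|Hx].
    1: left; left; reflexivity.
    2: right; exists q; split; [reflexivity | left; reflexivity].
    all: destruct (IH m' Hm' Hx) as [H|[p [-> H]]];
      [left; right; exact H | right; exists p; split; [reflexivity | right; exact H]].
Qed.

Lemma literal_choices_exhaustive L : Provable (bigor (map bigand (literal_choices L))).
Proof.
  induction L as [|p L IH]; simpl.
  - exact (ax_MP _ _ prov_true (or_intro_l _ _)).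
  - refine (ax_MP _ _ IH _). apply bigor_elim. intros x Hx.
    apply in_map_iff in Hx. destruct Hx as [m [<- Hm]].
    refine (imp_trans _ _ _ (or_cases p _) _). rewrite map_app.
    apply or_elim; apply bigor_intro, in_or_app; [left | right]; apply in_map_iff;
      [exists (p :: m) | exists (Not p :: m)]; split; [reflexivity | apply in_map, Hm | reflexivity | apply in_map, Hm].
Qed.

Lemma literal_choice_of_set (W : fset) L :
  (forall p, In p L -> W p \/ W (Not p)) -> (forall p, In p L -> ~ (W p /\ W (Not p))) ->
  exists m, In m (literal_choices L) /\ (forall x, In x m -> W x) /\
    (forall p, In p L -> (W p -> In p m) /\ (W (Not p) -> In (Not p) m)).
Proof.
  induction L as [|q L IH]; intros Hdec Hnboth.
  - exists []. split; [left; reflexivity | split; intros; contradiction].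
  - destruct IH as [m [Hm [Hsub Hcomp]]];
      [intros; apply Hdec; right; assumption | intros; apply Hnboth; right; assumption |].
    assert (Hnew : forall r, (r = q \/ r = Not q) -> W r ->
              forall p, In p (q :: L) -> (W p -> In p (r :: m)) /\ (W (Not p) -> In (Not p) (r :: m))).
    { intros r Hr Wr p [<-|Hp].
      - split; intro HWp; left; destruct Hr as [->| ->]; auto;
          (exfalso; apply (Hnboth q); [now left | now split]).
      - destruct (Hcomp p Hp); split; intro; right; auto. }
    destruct (Hdec q (or_introl eq_refl)) as [Hq|Hq]; [exists (q :: m) | exists (Not q :: m)];
      (split; [simpl; apply in_or_app | split; [intros x [<-|Hx]; auto | apply Hnew; auto]]).
    + left; apply in_map, Hm.
    + right; apply in_map, Hm.
Qed.

Definition list_set (l : list form) : fset := fun x => In x l.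

Lemma fset_ext (A B : fset) : (forall x, A x <-> B x) -> A = B.
Proof.
  intro H. apply functional_extensionality. intro x. apply propositional_extensionality, H.
Qed.

Lemma set_consistent_not_both A p : set_consistent A -> A p -> A (Not p) -> False.
Proof.
  intros [l [Hen Hc]] H1 H2. apply Hc. apply not_of_imp_contra with p;
    apply conj_proj, Hen; assumption.
Qed.

Lemma set_consistent_add A q l :
  enumerates l A -> ~ Provable (Not (And q (conj l))) ->
  set_consistent (fun x => x = q \/ A x).
Proof.
  intros Hen Hc. exists (q :: l). split.
  - intro x. simpl. rewrite (Hen x). split; intros [E|E]; auto.
  - intro Hp. apply Hc. refine (imp_not_not _ _ _ Hp). apply imp_conj.
    intros x [<-|Hx]; [apply and_proj1 |].
    exact (imp_trans _ _ _ (and_proj2 _ _) (conj_proj _ _ Hx)).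
Qed.

(* Maximality: a formula of Cl(phi) missing from an atom is refuted together with it. *)
Lemma atom_decides phi W p : atom phi W -> Clp phi p -> W p \/ W (Not p).
Proof.
  intros [HCl [[lw [Hen Hcons]] Hmax]] Hp.
  assert (Hmissing : forall q, Cl phi q -> ~ W q -> Provable (Not (And q (conj lw)))).
  { intros q Hq HWq. apply NNPP; intro Hc. apply HWq.
    apply (Hmax (fun x => x = q \/ W x)); [| auto | exact (set_consistent_add _ _ _ Hen Hc) | auto].
    intros a [->|Ha]; auto. }
  apply NNPP; intro Hn. apply not_or_and in Hn. destruct Hn as [Hn1 Hn2].
  apply Hcons, not_by_cases with p; apply Hmissing; auto.
  - left; exact Hp.
  - right; exists p; auto.
Qed.

Lemma atom_is_choice phi W :
  atom phi W -> exists m, In m (literal_choices (closure_list phi)) /\ W = list_set m.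
Proof.
  intro HA. destruct (literal_choice_of_set W (closure_list phi)) as [m [Hm [Hsub Hcomp]]].
  - intros p Hp. apply (atom_decides phi); [exact HA | apply closure_list_spec, Hp].
  - intros p Hp [H1 H2]. exact (set_consistent_not_both W p (proj1 (proj2 HA)) H1 H2).
  - exists m. split; [exact Hm |]. apply fset_ext. intro x. split; [| apply Hsub].
    intro Wx. destruct ((proj1 HA) x Wx) as [H|[p [-> H]]];
      apply closure_list_spec in H; apply (Hcomp _ H); exact Wx.
Qed.

Lemma consistent_choice_atom phi m :
  In m (literal_choices (closure_list phi)) -> ~ Provable (Not (bigand m)) ->
  atom phi (list_set m).
Proof.
  intros Hm Hc. split; [| split].
  - intros x Hx. destruct (literal_choices_literal _ _ _ Hm Hx) as [H|[p [-> H]]];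
      apply closure_list_spec in H; [left; exact H | right; exists p; auto].
  - exists m. split; [intro x; reflexivity |].
    intro Hp. apply Hc. exact (imp_not_not _ _ (bigand_conj m) Hp).
  - intros W HWCl HmW HWc x Hx. destruct (HWCl x Hx) as [H|[p [-> H]]];
      apply closure_list_spec in H.
    + destruct (literal_choices_decide _ _ _ Hm H) as [H1|H1]; [exact H1 |].
      exfalso. exact (set_consistent_not_both W x HWc Hx (HmW _ H1)).
    + destruct (literal_choices_decide _ _ _ Hm H) as [H1|H1]; [| exact H1].
      exfalso. exact (set_consistent_not_both W p HWc (HmW _ H1) Hx).
Qed.

Definition reachable (phi : form) (V0 W : fset) : Prop :=
  exists k (V : nat -> fset),
    V 0 = V0 /\ (forall i, i <= k -> atom phi (V i)) /\
    (forall i, i < k -> trans (V i) (V (S i))) /\ V k = W.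

Lemma reachable_refl phi V0 : atom phi V0 -> reachable phi V0 V0.
Proof.
  intro H. exists 0, (fun _ => V0).
  split; [reflexivity | split; [intros; exact H | split; [intros; lia | reflexivity]]].
Qed.

Lemma reachable_step phi V0 W U :
  reachable phi V0 W -> atom phi U -> trans W U -> reachable phi V0 U.
Proof.
  intros [k [V [H0 [Ha [Ht Hk]]]]] HU HWU.
  exists (S k), (fun i => if Nat.leb i k then V i else U).
  split; [exact H0 |]. split; [| split].
  - intros i Hi. destruct (Nat.leb_spec i k); [apply Ha; assumption | exact HU].
  - intros i Hi. destruct (Nat.leb_spec i k); [| lia].
    destruct (Nat.leb_spec (S i) k).
    + apply Ht; lia.
    + replace i with k by lia. rewrite Hk. exact HWU.
  - destruct (Nat.leb_spec (S k) k); [lia | reflexivity].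
Qed.

Section NoEndingChain.

Variables (phi : form) (V0 : fset).
Hypothesis V0_atom : atom phi V0.
Hypothesis no_ending_chain : forall W, reachable phi V0 W -> ~ W (Next lfalse).

Definition is_reached (m : list form) : bool := classicb (reachable phi V0 (list_set m)).

Lemma is_reached_spec m : is_reached m = true <-> reachable phi V0 (list_set m).
Proof. exact (classicb_true _). Qed.

Definition reached : list (list form) := filter is_reached (literal_choices (closure_list phi)).

Definition unreached : list (list form) :=
  filter (fun m => negb (is_reached m)) (literal_choices (closure_list phi)).

Definition reached_disj : form := bigor (map bigand reached).

Lemma reached_not_end l : In l reached -> Provable (Imp (bigand l) (Not (Next lfalse))).
Proof.
  intro Hl. apply filter_In in Hl. destruct Hl as [Hch Hr]. apply is_reached_spec in Hr.
  apply bigand_proj.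
  assert (Hend : Clp phi (Next lfalse)) by exact (clp_untilr phi ltrue _ (clp_fin phi)).
  destruct (literal_choices_decide _ _ _ Hch (proj2 (closure_list_spec _ _) Hend)) as [H|H];
    [exfalso; exact (no_ending_chain _ Hr H) | exact H].
Qed.

(* An unreached choice is either inconsistent or an atom that a reached atom cannot step to. *)
Lemma unreached_refuted_next l m :
  In l reached -> In m unreached -> Provable (Imp (bigand l) (Next (Not (bigand m)))).
Proof.
  intros Hl Hm. apply filter_In in Hl, Hm. destruct Hl as [_ Hl], Hm as [Hch Hm].
  apply is_reached_spec in Hl.
  destruct (classic (Provable (Not (bigand m)))) as [Hinc|Hcons].
  { exact (imp_const _ _ (ax_RT1 _ Hinc)). }
  assert (Hnot_trans : ~ trans (list_set l) (list_set m)).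
  { intro Ht. apply Bool.negb_true_iff in Hm.
    rewrite (proj2 (is_reached_spec m)) in Hm; [discriminate |].
    exact (reachable_step _ _ _ _ Hl (consistent_choice_atom _ _ Hch Hcons) Ht). }
  apply imp_of_not_and_not.
  assert (Hrefuted : Provable (Not (And (conj l) (WNext (conj m))))).
  { apply NNPP; intro Hc. apply Hnot_trans. exists l, m.
    split; [intro; reflexivity | split; [intro; reflexivity | exact Hc]]. }
  refine (imp_not_not _ _ _ Hrefuted). apply imp_and.
  - exact (imp_trans _ _ _ (and_proj1 _ _) (bigand_conj l)).
  - exact (imp_trans _ _ _ (and_proj2 _ _) (wnext_mono _ _ (bigand_conj m))).
Qed.

Lemma reached_next l : In l reached -> Provable (Imp (bigand l) (Next reached_disj)).
Proof.
  intro Hl.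
  assert (Hall : Provable (Imp (bigand l)
            (WNext (bigor (map bigand (literal_choices (closure_list phi))))))).
  { refine (imp_trans _ _ _ _ (next_wnext_not_end _)). apply imp_and.
    - exact (reached_not_end l Hl).
    - exact (imp_const _ _ (ax_RT1 _ (literal_choices_exhaustive _))). }
  assert (Hexcl : Provable (Imp (bigand l) (Next (bigand (map (fun m => Not (bigand m)) unreached))))).
  { apply imp_next_bigand. intros x Hx. apply in_map_iff in Hx.
    destruct Hx as [m [<- Hm]]. exact (unreached_refuted_next l m Hl Hm). }
  refine (imp_trans _ _ _ (imp_and _ _ _ Hall Hexcl) _).
  refine (imp_trans _ _ _ (wnext_and_next _ _) _).
  exact (imp_trans _ _ _ (wnext_mono _ _ (bigor_filter _ _ _)) (wnext_next _)).
Qed.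

Lemma reached_disj_refutable : Provable (Not reached_disj).
Proof.
  apply not_invariant_before_end, bigor_elim. intros x Hx.
  apply in_map_iff in Hx. destruct Hx as [l [<- Hl]].
  exact (imp_and _ _ _ (reached_not_end l Hl) (reached_next l Hl)).
Qed.

Lemma no_ending_chain_absurd : False.
Proof.
  destruct (atom_is_choice _ _ V0_atom) as [m0 [Hch HV0]].
  assert (Hm0 : In m0 reached).
  { apply filter_In. split; [exact Hch |]. apply classicb_true.
    rewrite <- HV0. exact (reachable_refl _ _ V0_atom). }
  destruct V0_atom as [_ [[l [Hen Hcons]] _]]. apply Hcons.
  refine (imp_not_not _ _ _ (imp_not_not _ _ (bigor_intro _ _ (in_map _ _ _ Hm0))
                                           reached_disj_refutable)).
  apply imp_bigand. intros x Hx. apply conj_proj, Hen. rewrite HV0. exact Hx.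
Qed.

End NoEndingChain.

Theorem lemma1 : forall (phi : form) (V0 : fset),
  atom phi V0 ->
  exists (k : nat) (V : nat -> fset),
    V 0 = V0 /\
    (forall i, i <= k -> atom phi (V i)) /\
    (forall i, i < k -> trans (V i) (V (S i))) /\
    V k (Next lfalse).
Proof.
  intros phi V0 HV0. apply NNPP; intro Hnone.
  apply (no_ending_chain_absurd phi V0 HV0).
  intros W [k [V [H0 [Ha [Ht <-]]]]] Hend.
  apply Hnone. exists k, V. split; [exact H0 | split; [exact Ha | split; [exact Ht | exact Hend]]].
Qed.
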